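(* Let $N\ge 2$ be an integer and $\lambda>0$, $\mu>0$, $\Delta\ge 0$, $T_{cl}>0$ real ($T_{cl}=\mathbb{E}[T_{\text{cl}}]$, the expected cloud time). For each integer $c\in\{1,\dots,N\}$ let $a(c)=\lambda(\Delta+\frac{c}{N\mu})$ and $P_b(c)=\frac{a(c)^c/c!}{\sum_{j=0}^{c}a(c)^j/j!}$. For each positive divisor $c$ of $N$ (with $m=N/c$) define the average system time $$\mathbb{E}[T_{\text{sys}}(c)]=(1-P_b(c))\Big(\Delta+\frac{c}{N\mu}\Big)+P_b(c)\,T_{cl}.$$ (i) If $$T_{cl}\ge\frac{1}{\mu}\,\frac{1-\frac1N-P_b(N)+\frac{P_b(1)}{N}}{P_b(\lfloor N/2\rfloor)-P_b(N)}+\Delta,$$ then $\mathbb{E}[T_{\text{sys}}(c)]$ is minimized over the positive divisors $c$ of $N$ at $c=N$ (i.e. $m=1$). (ii) Assume $N\ge 3$. If $T_{cl}\in\big(\Delta+\frac{1}{N\mu},\,\Delta+\frac1\mu\big)$ and $\lambda\le\frac{N\mu}{(N-2)(\Delta N\mu+1)}$, then $\mathbb{E}[T_{\text{sys}}(c)]$ is minimized over the positive divisors $c$ of $N$ at $c=1$ (i.e. $m=N$).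
   Context: Model: an edge system has $N$ workers split into $c$ groups of $m=N/c$ workers each. Jobs arrive as a Poisson process of rate $\lambda$; each job is replicated to the $m$ workers of a free group, and a job finding all groups busy is blocked and executed in the cloud, taking expected time $T_{cl}$. Worker service times are shifted exponential $\mathrm{SExp}(\Delta,\mu)$ ($\Delta$ plus an exponential of rate $\mu$), so the job-computing time has mean $\Delta+\frac{1}{m\mu}=\Delta+\frac{c}{N\mu}$. Blocking is modeled by an M/G/c/c loss queue, giving the Erlang B blocking probability $P_b(c)$ with offered load $a(c)=\lambda\,\mathbb{E}[T_{\text{job}}]$. The average system time is $(1-P_b)\mathbb{E}[T_{\text{job}}]+P_b\,\mathbb{E}[T_{\text{cl}}]$. *)

From Stdlib Require Import Reals Arith.
Open Scope R_scope.

Definition load (N : nat) (lam mu Delta : R) (c : nat) : R :=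
  lam * (Delta + INR c / (INR N * mu)).

Definition erlangB (c : nat) (a : R) : R :=
  (a ^ c / INR (fact c)) / sum_f_R0 (fun j => a ^ j / INR (fact j)) c.

Definition Pb (N : nat) (lam mu Delta : R) (c : nat) : R :=
  erlangB c (load N lam mu Delta c).

Definition Tsys (N : nat) (lam mu Delta Tcl : R) (c : nat) : R :=
  (1 - Pb N lam mu Delta c) * (Delta + INR c / (INR N * mu))
  + Pb N lam mu Delta c * Tcl.

Definition minimizes_over_divisors (N : nat) (lam mu Delta Tcl : R) (c0 : nat) : Prop :=
  forall c : nat, (1 <= c)%nat -> Nat.divide c N ->
    Tsys N lam mu Delta Tcl c0 <= Tsys N lam mu Delta Tcl c.

(** The inverse of the Erlang B formula obeys 1/B(c,a) = 1 + (c/a)/B(c-1,a).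
    Since the load a(c) grows with c while the load per group a(c)/c does not,
    this recursion makes P_b(c) strictly decreasing in c.
    (i) A proper divisor c of N is at most ⌊N/2⌋, so the extra blocking
    P_b(c) - P_b(N) is at least P_b(⌊N/2⌋) - P_b(N) > 0, while the job time
    saved by c is at most (1 - P_b(N))/μ - (1 - P_b(1))/(Nμ); the threshold on
    T_cl says that the extra blocking, at cost T_cl - Δ per job, outweighs it.
    That bound on the saved time is nonnegative (P_b(N) <= a(N)/(a(N)+N) and
    a(N) <= N a(1)), which also yields T_cl >= Δ.
    (ii) As P_b(c) <= P_b(1), replacing T_cl by the larger Δ + 1/μ can only
    lower E[T_sys(c)] - E[T_sys(1)], which is then at least
    (1 - (N-1) P_b(1))/(Nμ); the bound on λ amounts to (N-2) a(1) <= 1, that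
    is (N-1) P_b(1) <= 1. *)

From Stdlib Require Import Reals Arith Lra Lia.
Open Scope R_scope.

Fixpoint inv_erlangB (n : nat) (a : R) : R :=
  match n with
  | O => 1
  | S k => 1 + INR (S k) / a * inv_erlangB k a
  end.

Lemma inv_erlangB_ge1 n a : 0 < a -> 1 <= inv_erlangB n a.
Proof.
  intro Ha; induction n as [|n IH]; cbn [inv_erlangB]; [lra|].
  assert (0 < INR (S n) / a) by (apply Rdiv_lt_0_compat; [apply lt_0_INR; lia|lra]).
  assert (0 <= INR (S n) / a * inv_erlangB n a) by (apply Rmult_le_pos; lra).
  lra.
Qed.

Lemma sum_erlang_terms n a : 0 < a ->
  sum_f_R0 (fun j => a ^ j / INR (fact j)) n = a ^ n / INR (fact n) * inv_erlangB n a.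
Proof.
  intro Ha; induction n as [|n IH]; [simpl; field|].
  cbn [sum_f_R0 inv_erlangB]. rewrite IH, fact_simpl, mult_INR. simpl pow.
  assert (INR (fact n) <> 0) by apply INR_fact_neq_0.
  assert (INR (S n) <> 0) by (apply not_0_INR; lia).
  field. lra.
Qed.

Lemma erlangB_inv n a : 0 < a -> erlangB n a = / inv_erlangB n a.
Proof.
  intro Ha. unfold erlangB. rewrite sum_erlang_terms by exact Ha.
  assert (0 < a ^ n) by (apply pow_lt; lra).
  assert (0 < INR (fact n)) by apply INR_fact_lt_0.
  pose proof (inv_erlangB_ge1 n a Ha).
  field. split; lra.
Qed.

Lemma erlangB_pos_le1 n a : 0 < a -> 0 < erlangB n a <= 1.
Proof.
  intro Ha. rewrite erlangB_inv by exact Ha.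
  pose proof (inv_erlangB_ge1 n a Ha).
  split; [apply Rinv_0_lt_compat; lra|].
  rewrite <- Rinv_1. apply Rinv_le_contravar; lra.
Qed.

Lemma erlangB_1 a : 0 < a -> erlangB 1 a = a / (1 + a).
Proof. intro Ha. rewrite erlangB_inv by exact Ha. simpl. field. lra. Qed.

Lemma erlangB_le_load_ratio n a : 0 < a -> erlangB (S n) a <= a / (a + INR (S n)).
Proof.
  intro Ha. rewrite erlangB_inv by exact Ha. cbn [inv_erlangB].
  pose proof (inv_erlangB_ge1 n a Ha).
  assert (Hn : 0 < INR (S n)) by (apply lt_0_INR; lia).
  assert (0 < INR (S n) / a) by (apply Rdiv_lt_0_compat; lra).
  replace (a / (a + INR (S n))) with (/ (1 + INR (S n) / a)) by (field; repeat split; lra).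
  apply Rinv_le_contravar; nra.
Qed.

Lemma erlangB_1_scaled_le k a : 0 < a -> k * a <= 1 -> (k + 1) * erlangB 1 a <= 1.
Proof.
  intros Ha Hk. rewrite erlangB_1 by exact Ha.
  replace ((k + 1) * (a / (1 + a))) with (1 - (1 - k * a) / (1 + a)) by (field; repeat split; lra).
  assert (0 <= (1 - k * a) / (1 + a)) by (apply Rle_mult_inv_pos; lra).
  lra.
Qed.

Lemma inv_erlangB_lt_succ n a a' : 0 < a -> a <= a' ->
  INR n * a' <= INR (S n) * a -> inv_erlangB n a < inv_erlangB (S n) a'.
Proof.
  revert a a'; induction n as [|n IH]; intros a a' Ha Haa' H.
  - simpl. assert (0 < 1 / a') by (apply Rdiv_lt_0_compat; lra). lra.
  - assert (IH' : inv_erlangB n a < inv_erlangB (S n) a').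
    { apply IH; auto. rewrite !S_INR in H. rewrite S_INR. nra. }
    cbn [inv_erlangB] in IH' |- *. fold (inv_erlangB n a) in IH' |- *.
    pose proof (inv_erlangB_ge1 n a Ha).
    assert (0 < INR (S n) / a) by (apply Rdiv_lt_0_compat; [apply lt_0_INR; lia|lra]).
    assert (INR (S n) / a <= INR (S (S n)) / a').
    { assert (E : INR (S (S n)) / a' - INR (S n) / a =
                  (INR (S (S n)) * a - INR (S n) * a') / (a * a')) by (field; repeat split; lra).
      assert (0 <= (INR (S (S n)) * a - INR (S n) * a') / (a * a'))
        by (apply Rle_mult_inv_pos; nra).
      lra. }
    nra.
Qed.

Lemma erlangB_lt_succ n a a' : 0 < a -> a <= a' ->
  INR n * a' <= INR (S n) * a -> erlangB (S n) a' < erlangB n a.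
Proof.
  intros Ha Haa' H. rewrite !erlangB_inv by lra.
  pose proof (inv_erlangB_ge1 n a Ha).
  apply Rinv_lt_contravar; [|apply inv_erlangB_lt_succ; auto].
  pose proof (inv_erlangB_ge1 (S n) a' ltac:(lra)). nra.
Qed.

Lemma proper_divisor_le_half c N :
  (c < N)%nat -> Nat.divide c N -> (c <= N / 2)%nat.
Proof.
  intros HcN [k Hk].
  pose proof (Nat.div_mod N 2 ltac:(lia)). pose proof (Nat.mod_upper_bound N 2 ltac:(lia)).
  destruct k as [|[|k]]; nia.
Qed.

Section SystemTime.

Variables (N : nat) (lam mu Delta : R).
Hypotheses (HN : (1 <= N)%nat) (Hlam : 0 < lam) (Hmu : 0 < mu) (HDelta : 0 <= Delta).

Local Notation a := (load N lam mu Delta).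
Local Notation P := (Pb N lam mu Delta).

Lemma N_pos : 0 < INR N.
Proof. apply lt_0_INR; lia. Qed.

Lemma Nmu_pos : 0 < INR N * mu.
Proof. pose proof N_pos. nra. Qed.

Lemma load_pos c : (1 <= c)%nat -> 0 < a c.
Proof.
  intro Hc. unfold load. pose proof N_pos. pose proof Nmu_pos.
  assert (0 < INR c / (INR N * mu)) by (apply Rdiv_lt_0_compat; [apply lt_0_INR; lia|lra]).
  nra.
Qed.

Lemma load_le c d : (c <= d)%nat -> a c <= a d.
Proof.
  intro Hcd. unfold load. pose proof N_pos. pose proof Nmu_pos.
  apply Rmult_le_compat_l; [lra|]. apply Rplus_le_compat_l.
  apply Rmult_le_compat_r; [apply Rlt_le, Rinv_0_lt_compat; lra|]. apply le_INR, Hcd.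
Qed.

Lemma load_per_group_le c d : (c <= d)%nat -> INR c * a d <= INR d * a c.
Proof.
  intro Hcd. unfold load. pose proof N_pos. pose proof Nmu_pos.
  assert (E : INR d * (lam * (Delta + INR c / (INR N * mu))) -
              INR c * (lam * (Delta + INR d / (INR N * mu))) = (INR d - INR c) * (lam * Delta))
    by (field; repeat split; lra).
  assert (INR c <= INR d) by (apply le_INR, Hcd).
  assert (0 <= lam * Delta) by (apply Rmult_le_pos; lra).
  nra.
Qed.

Lemma Pb_pos_le1 c : (1 <= c)%nat -> 0 < P c <= 1.
Proof. intro Hc. apply erlangB_pos_le1, load_pos, Hc. Qed.

Lemma Pb_lt c d : (1 <= c)%nat -> (c < d)%nat -> P d < P c.
Proof.
  intros Hc Hcd. induction Hcd as [|d Hcd IH].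
  - apply erlangB_lt_succ; [apply load_pos, Hc|apply load_le; lia|apply load_per_group_le; lia].
  - apply Rlt_trans with (P d); [|exact IH].
    apply erlangB_lt_succ; [apply load_pos; lia|apply load_le; lia|apply load_per_group_le; lia].
Qed.

Lemma Pb_le c d : (1 <= c)%nat -> (c <= d)%nat -> P d <= P c.
Proof.
  intros Hc Hcd. destruct (Nat.eq_dec c d) as [->|]; [lra|].
  apply Rlt_le, Pb_lt; lia.
Qed.

Lemma Pb_numerator_nonneg : 0 <= 1 - 1 / INR N - P N + P 1 / INR N.
Proof.
  assert (Ha1 : 0 < a 1) by (apply load_pos; lia).
  assert (HaN : 0 < a N) by (apply load_pos; lia).
  assert (HaN1 : a N <= INR N * a 1)
    by (pose proof (load_per_group_le 1 N HN) as H; simpl INR in H; lra).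
  assert (Hn : 1 <= INR N) by (apply (le_INR 1); lia).
  assert (HPN : P N <= a N / (a N + INR N)).
  { destruct N as [|n]; [lia|]. apply erlangB_le_load_ratio, HaN. }
  unfold Pb at 2. rewrite erlangB_1 by exact Ha1.
  assert (E : 1 - 1 / INR N - a N / (a N + INR N) + a 1 / (1 + a 1) / INR N =
              (INR N * INR N - INR N + (INR N * INR N * a 1 - a N))
              / (INR N * (a N + INR N) * (1 + a 1))) by (field; repeat split; lra).
  assert (0 <= (INR N * INR N - INR N + (INR N * INR N * a 1 - a N))
               / (INR N * (a N + INR N) * (1 + a 1))).
  { apply Rle_mult_inv_pos; [nra|].
    apply Rmult_lt_0_compat; [apply Rmult_lt_0_compat|]; lra. }
  lra.
Qed.

Lemma load_1_scaled_le :
  (3 <= N)%nat -> lam <= INR N * mu / ((INR N - 2) * (Delta * INR N * mu + 1)) ->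
  (INR N - 2) * a 1 <= 1.
Proof.
  intros HN3 Hlam'. pose proof N_pos. pose proof Nmu_pos.
  assert (HN3r : 3 <= INR N) by (replace 3 with (INR 3) by (simpl; lra); apply le_INR; lia).
  assert (0 <= Delta * INR N * mu) by (apply Rmult_le_pos; [apply Rmult_le_pos|]; lra).
  set (D := (INR N - 2) * (Delta * INR N * mu + 1)) in Hlam'.
  assert (HD : 0 < D) by (unfold D; apply Rmult_lt_0_compat; lra).
  unfold load. simpl INR.
  replace ((INR N - 2) * (lam * (Delta + 1 / (INR N * mu)))) with (lam * D / (INR N * mu))
    by (unfold D; field; repeat split; lra).
  assert (lam * D <= INR N * mu).
  { apply (Rmult_le_compat_r D) in Hlam'; [|lra].
    replace (INR N * mu / D * D) with (INR N * mu) in Hlam' by (field; repeat split; lra).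
    exact Hlam'. }
  apply (Rmult_le_reg_r (INR N * mu)); [lra|].
  replace (lam * D / (INR N * mu) * (INR N * mu)) with (lam * D) by (field; repeat split; lra).
  lra.
Qed.

Lemma Tsys_eq Tcl c :
  Tsys N lam mu Delta Tcl c = Delta + INR c / (INR N * mu) * (1 - P c) + P c * (Tcl - Delta).
Proof. unfold Tsys. ring. Qed.

Lemma Tsys_N_le Tcl c h : (1 <= c)%nat -> (c <= h)%nat -> (h < N)%nat ->
  Tcl >= 1 / mu * ((1 - 1 / INR N - P N + P 1 / INR N) / (P h - P N)) + Delta ->
  Tsys N lam mu Delta Tcl N <= Tsys N lam mu Delta Tcl c.
Proof.
  intros Hc Hch HhN HT. rewrite !Tsys_eq.
  pose proof N_pos. pose proof Nmu_pos. pose proof Pb_numerator_nonneg as Hnum.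
  set (num := 1 - 1 / INR N - P N + P 1 / INR N) in *.
  assert (HhN' : P N < P h) by (apply Pb_lt; lia).
  assert (P h <= P c) by (apply Pb_le; lia).
  assert (P c <= P 1) by (apply Pb_le; lia).
  pose proof (Pb_pos_le1 c Hc).
  assert (Hbound : 0 <= 1 / mu * (num / (P h - P N))).
  { apply Rmult_le_pos; [apply Rlt_le, Rdiv_lt_0_compat; lra|].
    apply Rle_mult_inv_pos; lra. }
  assert (Hcost : num / mu <= (P h - P N) * (Tcl - Delta)).
  { replace (num / mu) with ((P h - P N) * (1 / mu * (num / (P h - P N))))
      by (field; repeat split; lra).
    apply Rmult_le_compat_l; lra. }
  assert (Hnum_eq : num / mu = INR N / (INR N * mu) * (1 - P N) - 1 / (INR N * mu) * (1 - P 1))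
    by (unfold num; field; repeat split; lra).
  assert (Hc1 : 1 <= INR c) by (apply (le_INR 1); lia).
  assert (Hsaved : 1 / (INR N * mu) * (1 - P 1) <= INR c / (INR N * mu) * (1 - P c)).
  { replace (1 / (INR N * mu) * (1 - P 1)) with (/ (INR N * mu) * (1 - P 1))
      by (field; repeat split; lra).
    replace (INR c / (INR N * mu) * (1 - P c)) with (/ (INR N * mu) * (INR c * (1 - P c)))
      by (field; repeat split; lra).
    apply Rmult_le_compat_l; [apply Rlt_le, Rinv_0_lt_compat; lra|]. nra. }
  nra.
Qed.

Lemma Tsys_1_le Tcl c : (2 <= c)%nat -> (c <= N)%nat ->
  Tcl < Delta + 1 / mu -> (INR N - 1) * P 1 <= 1 ->
  Tsys N lam mu Delta Tcl 1 <= Tsys N lam mu Delta Tcl c.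
Proof.
  intros Hc HcN HT HP1. rewrite !Tsys_eq.
  pose proof N_pos. pose proof Nmu_pos.
  assert (Hc2 : 2 <= INR c) by (replace 2 with (INR 2) by (simpl; lra); apply le_INR; lia).
  assert (INR c <= INR N) by (apply le_INR, HcN).
  assert (P c <= P 1) by (apply Pb_le; lia).
  pose proof (Pb_pos_le1 c ltac:(lia)).
  set (w := / (INR N * mu)).
  assert (Hw : 0 < w) by (apply Rinv_0_lt_compat; lra).
  replace (1 / mu) with (INR N * w) in HT by (unfold w; field; repeat split; lra).
  replace (INR 1 / (INR N * mu)) with w by (unfold w; simpl; field; repeat split; lra).
  replace (INR c / (INR N * mu)) with (INR c * w) by (unfold w; field; repeat split; lra).
  assert ((P c - P 1) * (Tcl - Delta) >= (P c - P 1) * (INR N * w))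
    by (apply Rle_ge, Rmult_le_compat_neg_l; lra).
  assert (0 <= P c * (INR N - INR c) * w) by (apply Rmult_le_pos; [apply Rmult_le_pos|]; lra).
  nra.
Qed.

End SystemTime.

Theorem theorem2 (N : nat) (lam mu Delta Tcl : R)
  (HN : (2 <= N)%nat) (Hlam : 0 < lam) (Hmu : 0 < mu)
  (HDelta : 0 <= Delta) (HTcl : 0 < Tcl) :
  ( Tcl >= 1 / mu *
      ((1 - 1 / INR N - Pb N lam mu Delta N + Pb N lam mu Delta 1 / INR N)
       / (Pb N lam mu Delta (N / 2) - Pb N lam mu Delta N)) + Delta ->
    minimizes_over_divisors N lam mu Delta Tcl N )
  /\
  ( (3 <= N)%nat ->
    Delta + 1 / (INR N * mu) < Tcl -> Tcl < Delta + 1 / mu ->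
    lam <= INR N * mu / ((INR N - 2) * (Delta * INR N * mu + 1)) ->
    minimizes_over_divisors N lam mu Delta Tcl 1 ).
Proof.
  assert (HN1 : (1 <= N)%nat) by lia.
  split.
  - intros HT c Hc Hdiv.
    destruct (Nat.eq_dec c N) as [->|HcN]; [apply Rle_refl|].
    assert (HcN' : (c < N)%nat) by (pose proof (Nat.divide_pos_le c N ltac:(lia) Hdiv); lia).
    apply (Tsys_N_le N lam mu Delta HN1 Hlam Hmu HDelta Tcl c (N / 2)); auto.
    + apply proper_divisor_le_half; assumption.
    + apply Nat.div_lt; lia.
  -
    intros HN3 _ HT Hlam' c Hc Hdiv.
    destruct (Nat.eq_dec c 1) as [->|Hc1]; [apply Rle_refl|].
    apply (Tsys_1_le N lam mu Delta HN1 Hlam Hmu HDelta);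
      [lia|apply Nat.divide_pos_le; auto; lia|exact HT|].
    replace (INR N - 1) with (INR N - 2 + 1) by ring.
    apply erlangB_1_scaled_le; [apply load_pos; auto|].
    apply load_1_scaled_le; auto.
Qed.
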